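(* Let $\mathcal{F}$ be a frame and $C_s,C_o\subseteq\mathcal{CH}$. If there is no undirected path in the undirected graph of $\mathcal{F}$ between $C_s$ and $C_o$, then there is no disclosure between $C_s$ and $C_o$.
   Context: A frame $\mathcal{F}$ consists of pairwise disjoint sets $\mathcal{LO}$ (locations), $\mathcal{CH}$ (channels), $\mathcal{D}$ (data). Each channel $c$ either has both a sender $\mathrm{sender}(c)$ and recipient $\mathrm{recipient}(c)$ in $\mathcal{LO}$ (possibly equal), or neither; $\mathrm{chans}(\ell)=\{c:\mathrm{sender}(c)=\ell\text{ or }\mathrm{recipient}(c)=\ell\}$. Each location $\ell$ has a prefix-closed set $\mathrm{traces}(\ell)$ of finite or infinite sequences of labels $(c,v)$, $c\in\mathrm{chans}(\ell)$, $v\in\mathcal{D}$. Events come from a set $E$ with $\mathrm{chan}:E\to\mathcal{CH}$, $\mathrm{msg}:E\to\mathcal{D}$. A system of events $(B,\preceq)$ has $B\subseteq E$, $\preceq$ a partial order with finitely many predecessors per event; it is an execution ($\in\mathrm{exec}(\mathcal{F})$) iff for each location $\ell$ the events whose channel has $\ell$ as sender or recipient are linearly ordered and, as a sequence of labels $(\mathrm{chan}(e),\mathrm{msg}(e))$, lie in $\mathrm{traces}(\ell)$. $\mathcal{B}|_C$ keeps events with channel in $C$ with the restricted order; $\mathrm{lruns}_C=\{\mathcal{A}|_C:\mathcal{A}\in\mathrm{exec}(\mathcal{F})\}$; $J_C^{C'}(\mathcal{B})=\{\mathcal{A}|_{C'}:\mathcal{A}\in\mathrm{exec}(\mathcal{F}),\mathcal{A}|_C=\mathcal{B}\}$.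 There is no disclosure between $C$ and $C'$ iff $J_C^{C'}(\mathcal{B})=\mathrm{lruns}_{C'}$ for every $\mathcal{B}\in\mathrm{lruns}_C$. The undirected graph of $\mathcal{F}$ has vertices $\mathcal{LO}$ and an edge between $\ell_1,\ell_2$ whenever some channel has sender one of them and recipient the other. A path between $C_s$ and $C_o$ is an undirected path from a location that is an endpoint of a channel in $C_o$ to a location that is an endpoint of a channel in $C_s$. *)

From Stdlib Require Import List Relations.
Import ListNotations.

(* A (finite or infinite) sequence over A: a partial map nat -> option A
   which is defined on an initial segment of nat. *)
Definition is_seq {A : Type} (s : nat -> option A) : Prop :=
  forall n, s n = None -> s (S n) = None.

Definition trunc {A : Type} (n : nat) (s : nat -> option A) : nat -> option A :=
  fun i => if Nat.ltb i n then s i else None.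

(* Locations, channels and data are three (distinct, hence
   disjoint) types.  [ends c = Some (sender, recipient)] if c has
   endpoints, [None] if it has neither. *)
Record frame := {
  LO : Type;
  CH : Type;
  D : Type;
  ends : CH -> option (LO * LO);
  traces : LO -> (nat -> option (CH * D)) -> Prop;
  E : Type;
  chan : E -> CH;
  msg : E -> D;
  traces_seq : forall l s, traces l s -> is_seq s;
  traces_prefix : forall l s n, traces l s -> traces l (trunc n s);
  traces_chans : forall l s n c v, traces l s -> s n = Some (c, v) ->
      exists a b, ends c = Some (a, b) /\ (a = l \/ b = l)
}.

Section Frame.
Variable F : frame.

Definition endpoint (l : LO F) (c : CH F) : Prop :=
  exists a b, ends F c = Some (a, b) /\ (a = l \/ b = l).

Record sys := { ev : E F -> Prop; ord : E F -> E F -> Prop }.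

Definition is_sys (S : sys) : Prop :=
  (forall e1 e2, ord S e1 e2 -> ev S e1 /\ ev S e2) /\
  (forall e, ev S e -> ord S e e) /\
  (forall e1 e2, ord S e1 e2 -> ord S e2 e1 -> e1 = e2) /\
  (forall e1 e2 e3, ord S e1 e2 -> ord S e2 e3 -> ord S e1 e3) /\
  (forall e, ev S e -> exists l : list (E F), forall e', ord S e' e -> In e' l).

Definition label (e : E F) : CH F * D F := (chan F e, msg F e).

Definition local (l : LO F) (e : E F) : Prop := endpoint l (chan F e).

Definition execution (S : sys) : Prop :=
  is_sys S /\
  forall l : LO F,
    (forall e1 e2, ev S e1 -> ev S e2 -> local l e1 -> local l e2 ->
        ord S e1 e2 \/ ord S e2 e1) /\
    exists s : nat -> option (E F),
      is_seq s /\
      (forall n e, s n = Some e -> ev S e /\ local l e) /\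
      (forall e, ev S e -> local l e -> exists n, s n = Some e) /\
      (forall n m e1 e2, s n = Some e1 -> s m = Some e2 ->
          (ord S e1 e2 <-> n <= m)) /\
      traces F l (fun n => option_map label (s n)).

Definition restrict (C : CH F -> Prop) (S : sys) : sys :=
  {| ev := fun e => ev S e /\ C (chan F e);
     ord := fun e1 e2 => ord S e1 e2 /\ C (chan F e1) /\ C (chan F e2) |}.

Definition sys_eq (S T : sys) : Prop :=
  (forall e, ev S e <-> ev T e) /\ (forall e1 e2, ord S e1 e2 <-> ord T e1 e2).

Definition lruns (C : CH F -> Prop) (X : sys) : Prop :=
  exists A, execution A /\ sys_eq (restrict C A) X.

Definition J (C C' : CH F -> Prop) (B X : sys) : Prop :=
  exists A, execution A /\ sys_eq (restrict C A) B /\ sys_eq (restrict C' A) X.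

Definition no_disclosure (C C' : CH F -> Prop) : Prop :=
  forall B, lruns C B -> forall X, J C C' B X <-> lruns C' X.

Definition adj (l1 l2 : LO F) : Prop :=
  exists c a b, ends F c = Some (a, b) /\
    ((a = l1 /\ b = l2) \/ (a = l2 /\ b = l1)).

Definition path_between (Cs Co : CH F -> Prop) : Prop :=
  exists l1 l2 c1 c2,
    Co c1 /\ endpoint l1 c1 /\ Cs c2 /\ endpoint l2 c2 /\
    clos_refl_trans (LO F) adj l1 l2.

End Frame.

(* The channels connected in the undirected graph to some channel of [Co]
   form a set [K] such that every location has either all or none of its
   channels in [K].  Given an execution [A1] with [A1|Cs = B] and any
   execution [A2], keep the [K]-events of [A2] and the other events of [A1]:
   each location sees only one of the two executions, so the splice is again
   an execution, and it agrees with [A1] on [Cs] and with [A2] on [Co]. *)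
From Stdlib Require Import Relations Classical.

Section Splice.
Variable F : frame.

(* [execution F S] is convertible to [is_sys F S /\ forall l, local_execution S l]. *)
Definition local_execution (S : sys F) (l : LO F) : Prop :=
  (forall e1 e2, ev F S e1 -> ev F S e2 -> local F l e1 -> local F l e2 ->
      ord F S e1 e2 \/ ord F S e2 e1) /\
  exists s : nat -> option (E F),
    is_seq s /\
    (forall n e, s n = Some e -> ev F S e /\ local F l e) /\
    (forall e, ev F S e -> local F l e -> exists n, s n = Some e) /\
    (forall n m e1 e2, s n = Some e1 -> s m = Some e2 ->
        (ord F S e1 e2 <-> n <= m)) /\
    traces F l (fun n => option_map (label F) (s n)).

Lemma local_execution_agree (S T : sys F) (l : LO F) :
  (forall e, local F l e -> (ev F S e <-> ev F T e)) ->
  (forall e1 e2, local F l e1 -> local F l e2 ->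
      (ord F S e1 e2 <-> ord F T e1 e2)) ->
  local_execution T l -> local_execution S l.
Proof.
  intros Hev Hord [Hlin [s [Hseq [Hin [Hall [Hmono Htr]]]]]]. split.
  - intros e1 e2 H1 H2 L1 L2.
    rewrite (Hord e1 e2 L1 L2), (Hord e2 e1 L2 L1).
    apply Hlin; [apply Hev | apply Hev | |]; assumption.
  - exists s. split; [assumption | split; [| split; [| split]]]; try assumption.
    + intros n e Hs. destruct (Hin n e Hs) as [He Le].
      split; [apply Hev|]; assumption.
    + intros e He Le. apply Hall; [apply Hev|]; assumption.
    + intros n m e1 e2 H1 H2.
      destruct (Hin n e1 H1) as [_ L1], (Hin m e2 H2) as [_ L2].
      rewrite (Hord e1 e2 L1 L2). apply Hmono; assumption.
Qed.

Variable K : CH F -> Prop.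
Hypothesis K_local : forall l c c',
  endpoint F l c -> endpoint F l c' -> K c -> K c'.

Lemma local_all_or_none (l : LO F) :
  (forall e, local F l e -> K (chan F e)) \/
  (forall e, local F l e -> ~ K (chan F e)).
Proof.
  destruct (classic (exists c, endpoint F l c /\ K c)) as [[c [Lc Kc]] | HnK].
  - left. intros e Le. exact (K_local l c (chan F e) Lc Le Kc).
  - right. intros e Le Ke. apply HnK. exists (chan F e). split; assumption.
Qed.

Variables A1 A2 : sys F.

Definition splice : sys F :=
  {| ev := fun e => (ev F A2 e /\ K (chan F e)) \/ (ev F A1 e /\ ~ K (chan F e));
     ord := fun e1 e2 =>
       (ord F A2 e1 e2 /\ K (chan F e1) /\ K (chan F e2)) \/
       (ord F A1 e1 e2 /\ ~ K (chan F e1) /\ ~ K (chan F e2)) |}.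

Lemma splice_is_sys : is_sys F A1 -> is_sys F A2 -> is_sys F splice.
Proof.
  intros [ev1 [refl1 [anti1 [trans1 fin1]]]] [ev2 [refl2 [anti2 [trans2 fin2]]]].
  split; [|split; [|split; [|split]]]; simpl.
  - intros x y [[H [Kx Ky]] | [H [Kx Ky]]].
    + destruct (ev2 _ _ H). tauto.
    + destruct (ev1 _ _ H). tauto.
  - intros x [[H Kx] | [H Kx]]; [left | right]; auto.
  - intros x y [[H [Kx Ky]] | [H [Kx Ky]]] [[H' [Ky' Kx']] | [H' [Ky' Kx']]];
      try tauto; eauto.
  - intros x y z [[H [Kx Ky]] | [H [Kx Ky]]] [[H' [Ky' Kz]] | [H' [Ky' Kz]]];
      try tauto; [left | right]; split; eauto.
  - intros x [[H Kx] | [H Kx]].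
    + destruct (fin2 x H) as [ls Hls]. exists ls.
      intros y [[Hy _] | [_ [_ Kx']]]; [auto | tauto].
    + destruct (fin1 x H) as [ls Hls]. exists ls.
      intros y [[_ [_ Kx']] | [Hy _]]; [tauto | auto].
Qed.

Lemma splice_execution : execution F A1 -> execution F A2 -> execution F splice.
Proof.
  intros [S1 Loc1] [S2 Loc2]. split; [exact (splice_is_sys S1 S2)|]. intros l.
  destruct (local_all_or_none l) as [HK | HnK];
    [apply (local_execution_agree splice A2) | apply (local_execution_agree splice A1)];
    try (apply Loc1 || apply Loc2); simpl.
  - intros e Le. specialize (HK e Le). tauto.
  - intros e1 e2 L1 L2. pose proof (HK e1 L1). pose proof (HK e2 L2). tauto.
  - intros e Le. specialize (HnK e Le). tauto.
  - intros e1 e2 L1 L2. pose proof (HnK e1 L1). pose proof (HnK e2 L2). tauto.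
Qed.

Lemma restrict_splice_in (C : CH F -> Prop) :
  (forall c, C c -> K c) -> sys_eq F (restrict F C splice) (restrict F C A2).
Proof.
  intros HC. split; simpl.
  - intros e. pose proof (HC (chan F e)). tauto.
  - intros x y. pose proof (HC (chan F x)). pose proof (HC (chan F y)). tauto.
Qed.

Lemma restrict_splice_out (C : CH F -> Prop) :
  (forall c, C c -> ~ K c) -> sys_eq F (restrict F C splice) (restrict F C A1).
Proof.
  intros HC. split; simpl.
  - intros e. pose proof (HC (chan F e)). tauto.
  - intros x y. pose proof (HC (chan F x)). pose proof (HC (chan F y)). tauto.
Qed.

End Splice.

Lemma sys_eq_trans (F : frame) (S T U : sys F) :
  sys_eq F S T -> sys_eq F T U -> sys_eq F S U.
Proof.
  intros [evST ordST] [evTU ordTU].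
  split; intros; [rewrite evST, evTU | rewrite ordST, ordTU]; tauto.
Qed.

Theorem no_disclosure_of_cut (F : frame) (Cs Co K : CH F -> Prop) :
  (forall l c c', endpoint F l c -> endpoint F l c' -> K c -> K c') ->
  (forall c, Co c -> K c) ->
  (forall c, Cs c -> ~ K c) ->
  no_disclosure F Cs Co.
Proof.
  intros K_local CoK CsK B [A1 [Ex1 HB]] X. split.
  - intros [A [ExA [_ HX]]]. exists A. split; assumption.
  - intros [A2 [Ex2 HX]]. exists (splice F K A1 A2).
    split; [| split].
    + apply splice_execution; assumption.
    + eapply sys_eq_trans; [apply restrict_splice_out|]; eassumption.
    + eapply sys_eq_trans; [apply restrict_splice_in|]; eassumption.
Qed.

Section Reachable.
Variable F : frame.
Variable Co : CH F -> Prop.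

Definition reachable_loc (l : LO F) : Prop :=
  exists l0 c0, Co c0 /\ endpoint F l0 c0 /\ clos_refl_trans (LO F) (adj F) l0 l.

(* The disjunct [Co c] matters for channels without endpoints. *)
Definition reachable_chan (c : CH F) : Prop :=
  Co c \/ exists l, reachable_loc l /\ endpoint F l c.

Lemma endpoints_connected (l l' : LO F) (c : CH F) :
  endpoint F l c -> endpoint F l' c -> clos_refl_trans (LO F) (adj F) l l'.
Proof.
  intros [a [b [Hc Hl]]] [a' [b' [Hc' Hl']]].
  rewrite Hc in Hc'. injection Hc' as <- <-.
  destruct Hl as [<- | <-], Hl' as [<- | <-];
    try apply rt_refl; apply rt_step; exists c, a, b; auto.
Qed.

Lemma reachable_chan_loc (l : LO F) (c : CH F) :
  reachable_chan c -> endpoint F l c -> reachable_loc l.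
Proof.
  intros [Hc | [l' [[l0 [c0 [Hc0 [L0 Hpath]]]] Ll']]] Lc.
  - exists l, c. repeat split; [assumption | assumption | apply rt_refl].
  - exists l0, c0. repeat split; try assumption.
    eapply rt_trans; [exact Hpath | eapply endpoints_connected; eassumption].
Qed.

Lemma reachable_chan_local (l : LO F) (c c' : CH F) :
  endpoint F l c -> endpoint F l c' -> reachable_chan c -> reachable_chan c'.
Proof.
  intros Lc Lc' Hc. right. exists l. split; [|assumption].
  eapply reachable_chan_loc; eassumption.
Qed.

Lemma reachable_chan_disjoint (Cs : CH F -> Prop) :
  (forall c, Cs c -> Co c -> ends F c <> None) ->
  ~ path_between F Cs Co ->
  forall c, Cs c -> ~ reachable_chan c.
Proof.
  intros Hends Hnopath c Hs [Ho | [l [[l0 [c0 [Ho0 [L0 Hpath]]]] Lc]]].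
  - destruct (ends F c) as [[a b] |] eqn:Hc; [| exact (Hends c Hs Ho Hc)].
    assert (La : endpoint F a c) by (exists a, b; auto).
    apply Hnopath. exists a, a, c, c. repeat split; auto using rt_refl.
  - apply Hnopath. exists l0, l, c0, c. repeat split; assumption.
Qed.

End Reachable.

Theorem corollary1 (F : frame) (Cs Co : CH F -> Prop) :
  (forall c, Cs c -> Co c -> ends F c <> None) ->
  ~ path_between F Cs Co ->
  no_disclosure F Cs Co.
Proof.
  intros Hends Hnopath.
  apply (no_disclosure_of_cut F Cs Co (reachable_chan F Co)).
  - apply reachable_chan_local.
  - intros c Hc. left. exact Hc.
  - apply reachable_chan_disjoint; assumption.
Qed.
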